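(* Let $T=((\Omega,\mathcal{A}),\{(\Omega,\mathcal{M}_i)\}_{i\in N},\{t_i\}_{i\in N})$ be a type space and let $S\subseteq\Omega$ be a common certainty component such that the players' beliefs in the induced type space $T_S$ are consistent. Then the players' beliefs in $T$ are consistent.
   Context: A field on a set $X$ is a collection of subsets of $X$ containing $X$ and closed under complements and finite intersections. For a field $\mathcal{A}$ on $\Omega$, $\mathrm{pba}(\Omega,\mathcal{A})$ is the set of finitely additive nonnegative $P:\mathcal{A}\to\mathbb{R}$ with $P(\Omega)=1$; $B(\Omega,\mathcal{A})$ the sup-norm closure of the linear span of indicators of sets in $\mathcal{A}$; bounded finitely additive set functions carry the weak* topology (weakest making $\mu\mapsto\int f\,d\mu$ continuous for all $f\in B(\Omega,\mathcal{A})$), $\overline{\,\cdot\,}^\ast$ denotes weak* closure. A type space: $N$ a nonempty set of players, fields $\mathcal{M}_i\subseteq\mathcal{A}$ on a set $\Omega$, $t_i:\Omega\times\mathcal{A}\to[0,1]$ with $t_i(\omega,\cdot)\in\mathrm{pba}(\Omega,\mathcal{A})$, $t_i(\cdot,E)\in B(\Omega,\mathcal{M}_i)$ for $E\in\mathcal{A}$, and $t_i(\omega,E)=1$ whenever $E\in\mathcal{M}_i$, $\omega\in E$. $\Pi_i=\overline{\mathrm{conv}\{t_i(\omega,\cdot):\omega\in\Omega\}}^\ast$ (equivalently the $P\in\mathrm{pba}(\Omega,\mathcal{A})$ with $P(E\cap F)=\int_F t_i(\cdot,E)\,dP$ for all $E\in\mathcal{A},F\in\mathcal{M}_i$). The players'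 beliefs in a type space are consistent if $\bigcap_{i\in I}\Pi_i\ne\emptyset$ for every finite set $I$ of players. A nonempty $S\subseteq\Omega$ is a common certainty component if there is $E\in\mathcal{A}$ with $E\subseteq S$ and $t_i(\omega,E)=1$ for all $\omega\in S$, $i\in N$. The induced type space is $T_S=((S,\mathcal{A}^S),\{(S,\mathcal{M}_i^S)\}_{i\in N},\{t_i^S\}_{i\in N})$ with $\mathcal{A}^S=\{F\cap S:F\in\mathcal{A}\}$, $\mathcal{M}_i^S=\{F\cap S:F\in\mathcal{M}_i\}$, $t_i^S(\omega,F\cap S)=t_i(\omega,F)$ for $\omega\in S$, $F\in\mathcal{A}$. *)

From Stdlib Require Import ClassicalEpsilon.
From mathcomp Require Import all_boot all_order all_algebra.
From mathcomp Require Import all_classical all_reals.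
Import Order.TTheory GRing.Theory Num.Theory.

Set Implicit Arguments.
Unset Strict Implicit.
Unset Printing Implicit Defensive.

Local Open Scope classical_set_scope.
Local Open Scope ring_scope.

Section TypeSpaces.
Variable R : realType.

Definition is_field {T : Type} (F : set (set T)) : Prop :=
  F setT /\ (forall E, F E -> F (~` E)) /\
  (forall E G, F E -> F G -> F (E `&` G)).

(* pba(T, A): finitely additive, nonnegative, total mass 1 (values off A
   are irrelevant). *)
Definition pba {T : Type} (A : set (set T)) (P : set T -> R) : Prop :=
  (forall E, A E -> 0 <= P E) /\ P setT = 1 /\
  (forall E G, A E -> A G -> E `&` G = set0 -> P (E `|` G) = P E + P G).

Definition simple_eval {T : Type} (s : seq (R * set T)) (w : T) : R :=
  \sum_(p <- s) p.1 * (`[< p.2 w >])%:R.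

Definition simple_on {T : Type} (F : set (set T)) (s : seq (R * set T)) : Prop :=
  List.Forall (fun p => F p.2) s.

Definition simple_integral {T : Type} (mu : set T -> R) (s : seq (R * set T)) : R :=
  \sum_(p <- s) p.1 * mu p.2.

(* B(T, F): sup-norm closure of the span of indicators of sets in F *)
Definition in_B {T : Type} (F : set (set T)) (f : T -> R) : Prop :=
  forall e : R, 0 < e -> exists s, simple_on F s /\
    forall w, `|f w - simple_eval s w| <= e.

Definition is_integral {T : Type} (A : set (set T)) (mu : set T -> R)
    (f : T -> R) (I : R) : Prop :=
  forall e : R, 0 < e -> exists s, simple_on A s /\
    (forall w, `|f w - simple_eval s w| <= e) /\
    `|I - simple_integral mu s| <= e.

(* P lies in the weak* closure of C: every basic weak* neighbourhood of P
   (given by finitely many f in B(T,A) and e > 0) meets C. *)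
Definition weak_closure {T : Type} (A : set (set T)) (C : set (set T -> R))
    (P : set T -> R) : Prop :=
  forall (fs : seq (T -> R)) (e : R), 0 < e ->
    List.Forall (in_B A) fs ->
    exists Q, C Q /\ List.Forall (fun f => exists I J,
      is_integral A P f I /\ is_integral A Q f J /\ `|I - J| < e) fs.

Definition conv_types {T : Type} (ti : T -> set T -> R) : set (set T -> R) :=
  fun Q => exists s : seq (R * T),
    List.Forall (fun p => 0 <= p.1) s /\ \sum_(p <- s) p.1 = 1 /\
    forall E, Q E = \sum_(p <- s) p.1 * ti p.2 E.

Definition Pi {N T : Type} (A : set (set T)) (t : N -> T -> set T -> R)
    (i : N) : set (set T -> R) :=
  fun P => pba A P /\ weak_closure A (conv_types (t i)) P.

Definition type_space {N T : Type} (A : set (set T)) (M : N -> set (set T))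
    (t : N -> T -> set T -> R) : Prop :=
  inhabited N /\ is_field A /\
  forall i, is_field (M i) /\ M i `<=` A /\
    (forall w E, A E -> 0 <= t i w E <= 1) /\
    (forall w, pba A (t i w)) /\
    (forall E, A E -> in_B (M i) (fun w => t i w E)) /\
    (forall E w, M i E -> E w -> t i w E = 1).

Definition consistent {N T : Type} (A : set (set T)) (M : N -> set (set T))
    (t : N -> T -> set T -> R) : Prop :=
  forall I : seq N, exists P, forall i, List.In i I -> Pi A t i P.

Definition common_certainty_component {N T : Type} (A : set (set T))
    (t : N -> T -> set T -> R) (S : set T) : Prop :=
  (exists w, S w) /\
  exists E, A E /\ E `<=` S /\ forall w i, S w -> t i w E = 1.

Definition sub_of {T : Type} (S : set T) := {w : T | S w}.

Definition induced_field {T : Type} (S : set T) (F : set (set T))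
    : set (set (sub_of S)) :=
  fun G => exists H, F H /\ G = (@proj1_sig T S) @^-1` H.

Definition induced_M {N T : Type} (S : set T) (M : N -> set (set T))
    : N -> set (set (sub_of S)) :=
  fun i => @induced_field T S (M i).

(* t_i^S(w, F \cap S) = t_i(w, F), F chosen in A (well defined for a
   common certainty component); arbitrary off A^S *)
Definition induced_t {N T : Type} (A : set (set T)) (t : N -> T -> set T -> R)
    (S : set T) : N -> sub_of S -> set (sub_of S) -> R :=
  fun i w G => t i (proj1_sig w)
    (epsilon (inhabits setT) (fun H => A H /\ G = (@proj1_sig T S) @^-1` H)).

End TypeSpaces.

Arguments induced_field {T} S F.
Arguments induced_M {N T} S M.
Arguments induced_t {R N T} A t S.

(* If every type at a state of S is certain of some E ⊆ S in A, then t_i(ω, F)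
   depends only on F ∩ E for ω ∈ S, so the induced types are just the original
   types restricted to S.  A common prior P^S of the induced space therefore
   pushes forward to P(F) := P^S(F ∩ S): pulling a test function f ∈ B(Ω, A)
   back to f|_S turns every weak* approximation of P^S by convex combinations
   of induced types into one of P by the same combinations of the original
   types.  Integrals are compared through simple functions, using that a
   finitely additive probability integrates a simple function bounded by c to
   at most c. *)
From Stdlib Require List.
From Stdlib Require Import ClassicalEpsilon.
From mathcomp Require Import all_boot all_order all_algebra.
From mathcomp Require Import all_classical all_reals.
From mathcomp Require Import lra.
Import Order.TTheory GRing.Theory Num.Theory.

Set Implicit Arguments.
Unset Strict Implicit.
Unset Printing Implicit Defensive.

Local Open Scope classical_set_scope.
Local Open Scope ring_scope.

Section Fields.
Variables (T : Type) (F : set (set T)).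
Hypothesis hF : is_field F.

Lemma field_setT : F setT.
Proof. by case: hF. Qed.

Lemma field_setC X : F X -> F (~` X).
Proof. by case: hF => _ [+ _]; apply. Qed.

Lemma field_setI X Y : F X -> F Y -> F (X `&` Y).
Proof. by case: hF => _ [_]; apply. Qed.

Lemma field_set0 : F set0.
Proof. by rewrite -setCT; apply: field_setC; exact: field_setT. Qed.

Lemma field_setU X Y : F X -> F Y -> F (X `|` Y).
Proof.
move=> hX hY; rewrite -(setCK (X `|` Y)) setCU.
by apply: field_setC; apply: field_setI; exact: field_setC.
Qed.

End Fields.

Lemma is_field_induced (T : Type) (S : set T) (F : set (set T)) :
  is_field F -> is_field (induced_field S F).
Proof.
move=> hF; split; [|split].
- by exists setT; rewrite preimage_setT; split => //; exact: field_setT.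
- move=> _ [H [hH ->]]; exists (~` H); rewrite preimage_setC.
  by split => //; exact: field_setC.
- move=> _ _ [H1 [hH1 ->]] [H2 [hH2 ->]]; exists (H1 `&` H2).
  by rewrite preimage_setI; split => //; exact: field_setI.
Qed.

Section SimpleFunctions.
Variables (R : realType) (T : Type).
Implicit Types (s : seq (R * set T)) (F : set (set T)) (mu : set T -> R).

Lemma simple_integral_cons mu a H s :
  simple_integral mu ((a, H) :: s) = a * mu H + simple_integral mu s.
Proof. exact: big_cons. Qed.

Definition simple_sub s1 s2 := s1 ++ [seq (- p.1, p.2) | p <- s2].

Lemma simple_on_sub F s1 s2 :
  simple_on F s1 -> simple_on F s2 -> simple_on F (simple_sub s1 s2).
Proof. by move=> h1 h2; apply/List.Forall_app; split => //; apply/List.Forall_map. Qed.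

Lemma simple_eval_sub s1 s2 w :
  simple_eval (simple_sub s1 s2) w = simple_eval s1 w - simple_eval s2 w.
Proof.
rewrite /simple_eval big_cat big_map /= -sumrN.
by congr (_ + _); apply: eq_bigr => p _; rewrite mulNr.
Qed.

Lemma simple_integral_sub mu s1 s2 :
  simple_integral mu (simple_sub s1 s2) = simple_integral mu s1 - simple_integral mu s2.
Proof.
rewrite /simple_integral big_cat big_map /= -sumrN.
by congr (_ + _); apply: eq_bigr => p _; rewrite mulNr.
Qed.

End SimpleFunctions.

Section FinitelyAdditiveProbability.
Variables (R : realType) (T : Type) (F : set (set T)) (mu : set T -> R).
Hypotheses (hF : is_field F) (hmu : pba F mu).

Lemma pba_ge0 X : F X -> 0 <= mu X.
Proof. by case: hmu => h _; exact: h. Qed.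

Lemma pba_setT : mu setT = 1.
Proof. by case: hmu => _ []. Qed.

Lemma pba_setU X Y : F X -> F Y -> X `&` Y = set0 -> mu (X `|` Y) = mu X + mu Y.
Proof. by case: hmu => _ [_ h]; exact: h. Qed.

Lemma pba_set0 : mu set0 = 0.
Proof.
have := pba_setU (field_set0 hF) (field_set0 hF) (setI0 _).
by rewrite setU0 => h; lra.
Qed.

Lemma pba_setI_setIC X H : F X -> F H -> mu X = mu (X `&` H) + mu (X `&` ~` H).
Proof.
move=> hX hH; rewrite -pba_setU.
- by rewrite -setIUr setUCr setIT.
- exact: field_setI.
- by apply: field_setI => //; exact: field_setC.
- by rewrite setIACA setICr !setI0.
Qed.

Lemma simple_integral_setI_setIC s X H : simple_on F s -> F X -> F H ->
  simple_integral (fun G => mu (G `&` X)) s =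
  simple_integral (fun G => mu (G `&` (X `&` H))) s +
  simple_integral (fun G => mu (G `&` (X `&` ~` H))) s.
Proof.
move=> + hX hH; elim: s => [|[a G] s IH].
  by rewrite /simple_integral !big_nil addr0.
move=> /List.Forall_cons_iff [/= hG hs]; rewrite !simple_integral_cons IH //.
by rewrite (@pba_setI_setIC (G `&` X) H) ?setIA //; [lra | exact: field_setI].
Qed.

Lemma simple_integral_setI_le s X c : simple_on F s -> F X ->
  (forall w, X w -> simple_eval s w <= c) ->
  simple_integral (fun G => mu (G `&` X)) s <= c * mu X.
Proof.
elim: s X c => [|[a H] s IH] X c.
  move=> _ hX hsX; rewrite /simple_integral big_nil.
  have [[w Xw]|noX] := pselect (exists w, X w).
    by rewrite mulr_ge0 ?pba_ge0 //; have := hsX w Xw; rewrite /simple_eval big_nil.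
  suff -> : X = set0 by rewrite pba_set0 mulr0.
  by apply/seteqP; split => // w Xw; apply: noX; exists w.
move=> /List.Forall_cons_iff [/= hH hs] hX hsX.
have hXH : F (X `&` H) by exact: field_setI.
have hXnH : F (X `&` ~` H) by apply: field_setI => //; exact: field_setC.
have onH : simple_integral (fun G => mu (G `&` (X `&` H))) s <= (c - a) * mu (X `&` H).
  apply: IH => // w [Xw Hw]; have := hsX w Xw.
  by rewrite /simple_eval big_cons /= asboolT // mulr1 => ?; lra.
have offH : simple_integral (fun G => mu (G `&` (X `&` ~` H))) s <= c * mu (X `&` ~` H).
  apply: IH => // w [Xw nHw]; have := hsX w Xw.
  by rewrite /simple_eval big_cons /= asboolF // mulr0 add0r.
rewrite simple_integral_cons (simple_integral_setI_setIC hs hX hH).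
rewrite (pba_setI_setIC hX hH) setIC.
by move: onH offH; rewrite mulrBl mulrDr; lra.
Qed.

Lemma simple_integral_le s c : simple_on F s ->
  (forall w, simple_eval s w <= c) -> simple_integral mu s <= c.
Proof.
move=> hs hsc.
have restrictT : (fun G => mu (G `&` setT)) = mu by apply/funext => G; rewrite setIT.
have := simple_integral_setI_le hs (field_setT hF) (fun w _ => hsc w).
by rewrite pba_setT mulr1 restrictT.
Qed.

Lemma simple_integral_dist s1 s2 c : simple_on F s1 -> simple_on F s2 ->
  (forall w, `|simple_eval s1 w - simple_eval s2 w| <= c) ->
  `|simple_integral mu s1 - simple_integral mu s2| <= c.
Proof.
have sub_le s s' : simple_on F s -> simple_on F s' ->
    (forall w, `|simple_eval s w - simple_eval s' w| <= c) ->
    simple_integral mu s - simple_integral mu s' <= c.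
  move=> hs hs' hss'; rewrite -simple_integral_sub.
  apply: simple_integral_le (simple_on_sub hs hs') _ => w.
  by rewrite simple_eval_sub; exact: le_trans (ler_norm _) (hss' w).
move=> h1 h2 h12; rewrite ler_norml lerNl opprB !sub_le // => w.
by rewrite distrC.
Qed.

End FinitelyAdditiveProbability.

Lemma conv_types_pba (R : realType) (T : Type) (F : set (set T))
    (ti : T -> set T -> R) (Q : set T -> R) :
  (forall w, pba F (ti w)) -> conv_types ti Q -> pba F Q.
Proof.
move=> hti [s [hs0 [hs1 hQ]]]; split; [|split].
- move=> X hX; rewrite hQ; elim: s hs0 {hs1 hQ} => [|p s IH]; first by rewrite big_nil.
  move=> /List.Forall_cons_iff [hp hs].
  by rewrite big_cons addr_ge0 ?IH // mulr_ge0 // (pba_ge0 (hti _)).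
- by rewrite hQ -hs1; apply: eq_bigr => p _; rewrite (pba_setT (hti _)) mulr1.
- move=> X Y hX hY hXY; rewrite !hQ -big_split; apply: eq_bigr => p _.
  by rewrite (pba_setU (hti _)) // mulrDr.
Qed.

Section Pushforward.
Variables (R : realType) (T U : Type) (g : U -> T).
Variables (FA : set (set T)) (FS : set (set U)).
Hypothesis g_measurable : forall H, FA H -> FS (g @^-1` H).

Definition simple_preimage (s : seq (R * set T)) : seq (R * set U) :=
  [seq (p.1, g @^-1` p.2) | p <- s].

Lemma simple_eval_preimage s u : simple_eval (simple_preimage s) u = simple_eval s (g u).
Proof. by rewrite /simple_eval big_map. Qed.

Lemma simple_on_preimage s : simple_on FA s -> simple_on FS (simple_preimage s).
Proof.
move=> hs; apply/List.Forall_map.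
by apply: (List.Forall_impl _ _ hs) => -[a H] /= hH; apply: g_measurable.
Qed.

Lemma simple_integral_preimage (mu : set T -> R) (muS : set U -> R) s :
  (forall H, FA H -> mu H = muS (g @^-1` H)) -> simple_on FA s ->
  simple_integral mu s = simple_integral muS (simple_preimage s).
Proof.
move=> hmu; elim: s => [|[a H] s IH]; first by rewrite /simple_integral !big_nil.
move=> /List.Forall_cons_iff [/= hH hs].
by rewrite /simple_preimage /= !simple_integral_cons IH // hmu.
Qed.

Lemma in_B_comp (f : T -> R) : in_B FA f -> in_B FS (f \o g).
Proof.
move=> hf e e0; have [s [hs hfs]] := hf e e0.
exists (simple_preimage s); split; first exact: simple_on_preimage.
by move=> u; rewrite simple_eval_preimage; exact: hfs.
Qed.

Lemma pba_pushforward (muS : set U -> R) :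
  pba FS muS -> pba FA (fun H => muS (g @^-1` H)).
Proof.
move=> hmuS; split; [|split].
- by move=> X hX; apply: (pba_ge0 hmuS); exact: g_measurable.
- by rewrite preimage_setT (pba_setT hmuS).
- move=> X Y /g_measurable hX /g_measurable hY hXY.
  by rewrite preimage_setU (pba_setU hmuS) // -preimage_setI hXY preimage_set0.
Qed.

Section Integrals.
Variables (mu : set T -> R) (muS : set U -> R).
Hypotheses (hFS : is_field FS) (hmuS : pba FS muS).
Hypothesis mu_pushforward : forall H, FA H -> mu H = muS (g @^-1` H).

(* Pulled back to U, [s] and the e/4-approximation [s'] of [f \o g] given by
   [hI] differ by at most e/2, hence so do their integrals. *)
Lemma is_integral_pushforward (f : T -> R) I :
  in_B FA f -> is_integral FS muS (f \o g) I -> is_integral FA mu f I.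
Proof.
move=> hf hI e e0.
have e4 : 0 < e / 4 by rewrite divr_gt0.
have [s [hs hfs]] := hf _ e4.
have [s' [hs' [hfs' hIs']]] := hI _ e4.
exists s; split => //; split; first by move=> w; apply: le_trans (hfs w) _; lra.
have hss' : `|simple_integral muS (simple_preimage s) - simple_integral muS s'| <= e / 2.
  apply: (simple_integral_dist hFS hmuS (simple_on_preimage hs) hs') => u.
  rewrite simple_eval_preimage; have := hfs (g u); have := hfs' u => /= h' h.
  rewrite distrC in h; have := ler_distD (f (g u)) (simple_eval s (g u)) (simple_eval s' u).
  lra.
rewrite (simple_integral_preimage mu_pushforward hs).
have := ler_distD (simple_integral muS s') I (simple_integral muS (simple_preimage s)).
by rewrite [`|simple_integral muS s' - _|]distrC; lra.
Qed.

End Integrals.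

Lemma weak_closure_pushforward (CS : set (set U -> R)) (C : set (set T -> R))
    (PS : set U -> R) :
  is_field FS -> pba FS PS ->
  (forall QS, CS QS -> pba FS QS /\
     exists2 Q, C Q & forall H, FA H -> Q H = QS (g @^-1` H)) ->
  weak_closure FS CS PS -> weak_closure FA C (fun H => PS (g @^-1` H)).
Proof.
move=> hFS hPS hCS hPSC fs e e0 hfs.
have hfsS : List.Forall (in_B FS) [seq f \o g | f <- fs].
  by apply/List.Forall_map; apply: (List.Forall_impl _ _ hfs) => f /in_B_comp.
have [QS [hQS hPSQS]] := hPSC _ e e0 hfsS.
have [hQSpba [Q hQ hQQS]] := hCS QS hQS.
exists Q; split => //.
move/List.Forall_map: hPSQS => hPSQS.
apply: (List.Forall_impl _ _ (List.Forall_and hfs hPSQS)) => f [hf [I [J [hI [hJ hIJ]]]]].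
exists I, J; split; [|split] => //.
- exact: (is_integral_pushforward hFS hPS (fun _ _ => erefl) hf hI).
- exact: (is_integral_pushforward hFS hQSpba hQQS hf hJ).
Qed.

End Pushforward.

Section CertaintyComponent.
Variables (R : realType) (N Omega : Type) (A : set (set Omega)).
Variables (M : N -> set (set Omega)) (t : N -> Omega -> set Omega -> R).
Variables (S E : set Omega).
Hypotheses (hts : type_space A M t) (hEA : A E) (hES : E `<=` S).
Hypothesis E_certain : forall w i, S w -> t i w E = 1.

Let pr := @proj1_sig Omega S.

Lemma type_space_field : is_field A.
Proof. by case: hts => _ []. Qed.

Lemma type_space_pba i w : pba A (t i w).
Proof. by case: hts => _ [_ /(_ i) [_ [_ [_ [/(_ w)]]]]]. Qed.

Lemma type_space_le1 i w X : A X -> t i w X <= 1.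
Proof. by case: hts => _ [_ /(_ i) [_ [_ [/(_ w X) h _]]]] /h /andP[]. Qed.

Lemma t_setIE i w H : S w -> A H -> t i w H = t i w (H `&` E).
Proof.
move=> Sw hH; have hA := type_space_field; have hti := type_space_pba i w.
have hHnE : A (H `&` ~` E) by apply: field_setI => //; exact: field_setC.
have null : t i w (H `&` ~` E) = 0.
  have := type_space_le1 i w (field_setU hA hHnE hEA).
  rewrite (pba_setU hti) ?E_certain //; last by rewrite -setIA setICl setI0.
  by have := pba_ge0 hti hHnE; lra.
by rewrite (pba_setI_setIC hA hti hH hEA) null addr0.
Qed.

Lemma setIE_eq_of_preimage H H' : pr @^-1` H = pr @^-1` H' -> H `&` E = H' `&` E.
Proof.
move=> eqHH'; apply/seteqP; split => x [Hx Ex]; split => //.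
  by have : (pr @^-1` H) (exist _ x (hES Ex)) by []; rewrite eqHH'.
by have : (pr @^-1` H') (exist _ x (hES Ex)) by []; rewrite -eqHH'.
Qed.

Lemma induced_t_preimage i u H : A H -> induced_t A t S i u (pr @^-1` H) = t i (pr u) H.
Proof.
move=> hH; rewrite /induced_t.
have := epsilon_spec (inhabits setT) (fun H' => A H' /\ pr @^-1` H = pr @^-1` H')
  (ex_intro _ H (conj hH erefl)).
set H' := epsilon _ _ => -[hH' eqHH'].
have Su : S (pr u) := proj2_sig u.
by rewrite (t_setIE i Su hH) (t_setIE i Su hH') (setIE_eq_of_preimage eqHH').
Qed.

Lemma induced_t_pba i u : pba (induced_field S A) (induced_t A t S i u).
Proof.
have hA := type_space_field; have hti := type_space_pba i (pr u).
have Su : S (pr u) := proj2_sig u.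
split; [|split].
- by move=> _ [H [hH ->]]; rewrite induced_t_preimage // (pba_ge0 hti).
- rewrite -(preimage_setT pr) induced_t_preimage ?(pba_setT hti) //.
  exact: field_setT.
- move=> _ _ [H1 [hH1 ->]] [H2 [hH2 ->]] disj.
  rewrite -preimage_setU !induced_t_preimage //; last exact: field_setU.
  rewrite (t_setIE i Su hH1) (t_setIE i Su hH2) (t_setIE i Su (field_setU hA hH1 hH2)).
  have hH1E := field_setI hA hH1 hEA; have hH2E := field_setI hA hH2 hEA.
  rewrite setIUl (pba_setU hti) //.
  apply/seteqP; split => x // [[H1x Ex] [H2x _]].
  by have : (pr @^-1` H1 `&` pr @^-1` H2) (exist _ x (hES Ex)) by []; rewrite disj.
Qed.

Lemma conv_types_induced i QS : conv_types (induced_t A t S i) QS ->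
  exists2 Q, conv_types (t i) Q & forall H, A H -> Q H = QS (pr @^-1` H).
Proof.
move=> [s [hs0 [hs1 hQS]]].
exists (fun H => \sum_(p <- s) p.1 * t i (pr p.2) H).
  exists [seq (p.1, pr p.2) | p <- s]; split; first exact/List.Forall_map.
  by rewrite !big_map; split => // H; rewrite big_map.
move=> H hH; rewrite hQS; apply: eq_bigr => p _.
by rewrite induced_t_preimage.
Qed.

End CertaintyComponent.

Theorem lemma12 (R : realType) (N Omega : Type) (A : set (set Omega))
    (M : N -> set (set Omega)) (t : N -> Omega -> set Omega -> R)
    (S : set Omega) :
  type_space A M t ->
  common_certainty_component A t S ->
  consistent (induced_field S A) (induced_M S M) (induced_t A t S) ->
  consistent A M t.
Proof.
move=> hts [_ [E [hEA [hES E_certain]]]] hcons I.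
have [PS hPS] := hcons I.
pose pr := @proj1_sig Omega S.
have pr_measurable H : A H -> induced_field S A (pr @^-1` H) by exists H.
exists (fun H => PS (pr @^-1` H)) => i iI.
have [hPSpba hPSwc] := hPS i iI.
split; first exact: (pba_pushforward pr_measurable hPSpba).
apply: (weak_closure_pushforward pr_measurable _ hPSpba _ hPSwc).
  exact: (is_field_induced S (type_space_field hts)).
move=> QS hQS; split; last exact: (conv_types_induced hts hEA hES E_certain hQS).
by apply: conv_types_pba hQS => u; exact: (induced_t_pba hts hEA hES E_certain).
Qed.
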